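(* Let $K$ be a field and let $I$ be a monomial ideal in $R=K[x_1,\ldots,x_n]$ such that $I=I_1R+I_2R$, where $\mathcal{G}(I_1)\subset R_1=K[x_1,\ldots,x_m]$ and $\mathcal{G}(I_2)\subset R_2=K[x_{m+1},\ldots,x_n]$ for some $m\ge 1$. If $I_1$ (in $R_1$) and $I_2$ (in $R_2$) have the copersistence property, then $I$ has the copersistence property.
   Context: $\mathcal{G}(J)$ denotes the minimal set of monomial generators of a monomial ideal $J$. An ideal $I$ in a commutative Noetherian ring $R$ has the copersistence property if $\mathrm{Ass}_R(R/I^k)\supseteq\mathrm{Ass}_R(R/I^{k+1})$ for all $k\ge 1$. *)

From HB Require Import structures.
From mathcomp Require Import all_boot all_algebra.
From mathcomp Require Import multinomials.mpoly.
Set Implicit Arguments. Unset Strict Implicit. Unset Printing Implicit Defensive.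
Import GRing.Theory.
Local Open Scope ring_scope.

Definition subset_of (R : Type) := R -> Prop.

Section Ideals.
Variable R : comNzRingType.

Definition is_ideal (I : subset_of R) : Prop :=
  [/\ I 0, (forall a b, I a -> I b -> I (a + b)) & (forall r a, I a -> I (r * a))].

Definition ideal_gen (S : subset_of R) : subset_of R :=
  fun f => forall J, is_ideal J -> (forall g, S g -> J g) -> J f.

Definition ideal_sum (I J : subset_of R) : subset_of R :=
  ideal_gen (fun f => I f \/ J f).

Definition ideal_mul (I J : subset_of R) : subset_of R :=
  ideal_gen (fun f => exists a b, [/\ I a, J b & f = a * b]).

Fixpoint ideal_pow (I : subset_of R) (k : nat) : subset_of R :=
  match k with
  | 0 => fun _ => True
  | k'.+1 => ideal_mul (ideal_pow I k') I
  end.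

Definition prime_ideal (P : subset_of R) : Prop :=
  [/\ is_ideal P, ~ P 1 & forall a b, P (a * b) -> P a \/ P b].

(* P \in Ass_R(R/I): P is prime and P = (I : f) = Ann(f + I) for some f *)
Definition Ass (I : subset_of R) (P : subset_of R) : Prop :=
  prime_ideal P /\ exists f : R, forall g, P g <-> I (g * f).

Definition copersistence (I : subset_of R) : Prop :=
  forall k, (1 <= k)%N -> forall P, Ass (ideal_pow I k.+1) P -> Ass (ideal_pow I k) P.

Definition image_set (S : Type) (h : S -> R) (A : subset_of S) : subset_of R :=
  fun f => exists a, A a /\ f = h a.

Definition ideal_ext (S : Type) (h : S -> R) (A : subset_of S) : subset_of R :=
  ideal_gen (image_set h A).
End Ideals.

Definition monomial_ideal (K : fieldType) (n : nat) (I : subset_of {mpoly K[n]}) : Prop :=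
  exists S : subset_of 'X_{1..n},
    forall f, I f <-> ideal_gen (fun g : {mpoly K[n]} => exists mm, S mm /\ g = 'X_[mm]) f.

Definition embed_left (K : fieldType) (m p : nat) (f : {mpoly K[m]}) : {mpoly K[m + p]} :=
  mmap (@mpolyC (m + p) K) (fun i : 'I_m => 'X_(lshift p i)) f.

(* R2 = K[x_(m+1)..x_(m+p)] (variables renumbered 0..p-1) -> R *)
Definition embed_right (K : fieldType) (m p : nat) (f : {mpoly K[p]}) : {mpoly K[m + p]} :=
  mmap (@mpolyC (m + p) K) (fun j : 'I_p => 'X_(rshift m j)) f.

(* A monomial ideal is determined by the upward closed set [T] of exponents of
   its monomials; powers, sums and extensions of monomial ideals become
   iterated Minkowski sums, unions and images of such sets.  An associated prime
   of a monomial ideal [J] is a colon [(J : x^u)] by a single monomial and is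
   generated by a set [V] of variables, so [P \in Ass(R/I^k)] amounts to a
   witness [u] with [(T^k : u) = hits V].
   For [I = I1 R + I2 R] the exponents of [I^k] are the products of those of
   [I1^i] and [I2^j] with [i + j = k].  Given a witness for [I^(k+1)], shift
   it so that off [V] the two factors reach exactly the levels [a] and [b];
   then [a + b <= k].  If [a + b < k] the same witness works for [I^k]; if
   [a + b = k] then [a] or [b] is positive, and copersistence of [I1] (or [I2])
   lowers that level by one. *)

From mathcomp Require Import all_boot all_algebra.
From mathcomp Require Import multinomials.mpoly.
From mathcomp Require Import zify boolp.
Set Implicit Arguments. Unset Strict Implicit. Unset Printing Implicit Defensive.
Import GRing.Theory.
Local Open Scope ring_scope.

Section Ideals.
Variable R : comNzRingType.
Implicit Types (I J P Q S : subset_of R) (a b r x : R).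

Definition eqI I J := forall f, I f <-> J f.

Lemma eqI_sym I J : eqI I J -> eqI J I.
Proof. by move=> IJ f; split=> /IJ. Qed.

Lemma eqI_trans J I L : eqI I J -> eqI J L -> eqI I L.
Proof. by move=> IJ JL f; split=> [/IJ/JL | /JL/IJ]. Qed.

Lemma ideal0 I : is_ideal I -> I 0.
Proof. by case. Qed.

Lemma idealD I a b : is_ideal I -> I a -> I b -> I (a + b).
Proof. by case=> _ IB _; apply: IB. Qed.

Lemma idealMl I r a : is_ideal I -> I a -> I (r * a).
Proof. by case=> _ _ IM; apply: IM. Qed.

Lemma idealMr I r a : is_ideal I -> I a -> I (a * r).
Proof. by rewrite mulrC; apply: idealMl. Qed.

Lemma idealB I a b : is_ideal I -> I a -> I b -> I (a - b).
Proof. by move=> idI Ia Ib; apply: idealD => //; rewrite -mulN1r; apply: idealMl. Qed.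

Lemma ideal_big (T : Type) I (s : seq T) (p : pred T) (F : T -> R) :
  is_ideal I -> (forall t, p t -> I (F t)) -> I (\sum_(t <- s | p t) F t).
Proof.
move=> idI IF; elim: s => [|t s IHs]; first by rewrite big_nil; apply: ideal0.
by rewrite big_cons; case: ifP => // pt; apply: idealD => //; apply: IF.
Qed.

Lemma ideal_gen_ideal S : is_ideal (ideal_gen S).
Proof.
split=> [J [] // | a b Sa Sb J idJ SJ | r a Sa J idJ SJ].
  by apply: idealD => //; [apply: Sa | apply: Sb].
by apply: idealMl => //; apply: Sa.
Qed.

Lemma ideal_gen_sub S f : S f -> ideal_gen S f.
Proof. by move=> Sf J _; apply. Qed.

Lemma ideal_gen_min S J : is_ideal J -> (forall g, S g -> J g) ->
  forall f, ideal_gen S f -> J f.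
Proof. by move=> idJ SJ f; apply. Qed.

Lemma eq_ideal_gen S S' : eqI S S' -> eqI (ideal_gen S) (ideal_gen S').
Proof. by move=> SS' f; split=> Sf J idJ SJ; apply: Sf => // g /SS'; apply: SJ. Qed.

Lemma eq_ideal_mul I I' J J' :
  eqI I I' -> eqI J J' -> eqI (ideal_mul I J) (ideal_mul I' J').
Proof.
move=> II' JJ'; apply: eq_ideal_gen => g.
by split=> -[a [b [Ia Jb ->]]]; exists a, b; split; rewrite ?II' ?JJ' in Ia Jb *.
Qed.

Lemma eq_ideal_pow I I' k : eqI I I' -> eqI (ideal_pow I k) (ideal_pow I' k).
Proof. by move=> II'; elim: k => [|k IHk] //=; apply: eq_ideal_mul. Qed.

Lemma eq_ideal_sum I I' J J' :
  eqI I I' -> eqI J J' -> eqI (ideal_sum I J) (ideal_sum I' J').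
Proof. by move=> II' JJ'; apply: eq_ideal_gen => g; rewrite II' JJ'. Qed.

Lemma eq_ideal_ext (T : Type) (h : T -> R) (A A' : subset_of T) :
  (forall t, A t <-> A' t) -> eqI (ideal_ext h A) (ideal_ext h A').
Proof.
move=> AA'; apply: eq_ideal_gen => g.
by split=> -[t [At ->]]; exists t; rewrite AA' in At *.
Qed.

Lemma eq_prime_ideal P Q : eqI P Q -> prime_ideal P -> prime_ideal Q.
Proof.
move=> PQ [[P0 PD PM] P1 Pmul]; split.
- split=> [|a b /PQ Pa /PQ Pb|r a /PQ Pa]; apply/PQ; [exact: P0 | exact: PD | exact: PM].
- by move/PQ.
- by move=> a b; rewrite -!PQ; apply: Pmul.
Qed.

Lemma eq_Ass I J P : eqI I J -> Ass I P -> Ass J P.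
Proof. by move=> IJ [primeP [f Pf]]; split=> //; exists f => g; rewrite -IJ. Qed.

Lemma prime_ideal_prod P (T : Type) (s : seq T) (F : T -> R) :
  prime_ideal P -> (forall t, ~ P (F t)) -> ~ P (\prod_(t <- s) F t).
Proof.
case=> _ P1 Pmul PF; elim: s => [|t s IHs]; first by rewrite big_nil.
by rewrite big_cons => /Pmul[/PF | /IHs].
Qed.

Lemma prime_ideal_exp P x k : prime_ideal P -> P (x ^+ k) -> P x.
Proof.
case=> _ P1 Pmul; elim: k => [|k IHk]; first by rewrite expr0.
by rewrite exprS => /Pmul[// | /IHk].
Qed.

End Ideals.

(** * Monomial ideals as upsets of exponents *)

Lemma lepm_add2r n (m1 m2 m : 'X_{1..n}) : (m1 <= m2)%MM -> (m1 + m <= m2 + m)%MM.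
Proof. by move/mnm_lepP=> le12; apply/mnm_lepP => i; rewrite !mnmDE leq_add2r. Qed.

Section MonomialIdeals.
Variables (K : comNzRingType) (n : nat).
Local Notation R := {mpoly K[n]}.
Local Notation M := 'X_{1..n}.
Implicit Types (U A B : M -> Prop) (S : subset_of R) (f g : R).

Definition upset U := forall m m', U m -> (m <= m')%MM -> U m'.

Definition mideal U : subset_of R := fun f => forall m, m \in msupp f -> U m.

Lemma mideal_ideal U : upset U -> is_ideal (mideal U).
Proof.
move=> upU; split=> [m | a b Ua Ub m | r a Ua m]; first by rewrite msupp0.
  by move/msuppD_le; rewrite mem_cat => /orP[/Ua | /Ub].
move/msuppM_le/allpairsP=> [[m1 m2] [/= _ m2a ->]].
by apply: upU (Ua _ m2a) _; apply: lem_addl.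
Qed.

Lemma midealX U m : mideal U 'X_[m] <-> U m.
Proof.
split=> [| Um m']; first by apply; rewrite msuppX mem_head.
by rewrite msuppX mem_seq1 => /eqP ->.
Qed.

Lemma mideal_min U (J : subset_of R) : is_ideal J ->
  (forall m, U m -> J 'X_[m]) -> forall f, mideal U f -> J f.
Proof.
move=> idJ UJ f Uf; rewrite (mpolyE f) big_seq; apply: ideal_big => // m fm.
by rewrite -mul_mpolyC; apply: idealMl => //; apply/UJ/Uf.
Qed.

Lemma idealX_le (J : subset_of R) s m :
  is_ideal J -> J 'X_[s] -> (s <= m)%MM -> J 'X_[m].
Proof. by move=> idJ Js sm; rewrite -(submK sm) mpolyXD; apply: idealMl. Qed.

Lemma ideal_gen_mideal S U : upset U ->
  (forall g, S g -> mideal U g) -> (forall m, U m -> ideal_gen S 'X_[m]) ->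
  eqI (ideal_gen S) (mideal U).
Proof.
move=> upU SU US f; split; first exact: ideal_gen_min (mideal_ideal upU) SU f.
exact: mideal_min (ideal_gen_ideal S) US f.
Qed.

Lemma mideal_colon U u g :
  mideal U (g * 'X_[u]) <-> (forall m, m \in msupp g -> U (m + u)%MM).
Proof.
split=> gU m; rewrite ?(perm_mem (msuppMX g u)).
  by move=> gm; rewrite addmC; apply/gU; rewrite (perm_mem (msuppMX g u)) map_f.
by case/mapP=> m' gm' ->; rewrite addmC; apply: gU.
Qed.

Definition upclosure (Z : M -> Prop) : M -> Prop :=
  fun m => exists2 s, Z s & (s <= m)%MM.

Lemma upset_upclosure Z : upset (upclosure Z).
Proof. by move=> m m' [s Zs sm] mm'; exists s => //; apply: lepm_trans mm'. Qed.

Lemma monomial_idealE (Z : M -> Prop) :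
  eqI (ideal_gen (fun g => exists s, Z s /\ g = 'X_[s])) (mideal (upclosure Z)).
Proof.
apply: ideal_gen_mideal => [|_ [s [Zs ->]] | m [s Zs sm]]; first exact: upset_upclosure.
  by apply/midealX; exists s => //; apply: lepm_refl.
by apply: (idealX_le (ideal_gen_ideal _) _ sm); apply: ideal_gen_sub; exists s.
Qed.

Definition mmul A B : M -> Prop :=
  fun m => exists a b, [/\ A a, B b & (a + b <= m)%MM].

Lemma upset_mmul A B : upset (mmul A B).
Proof.
by move=> m m' [a [b [Aa Bb abm]]] mm'; exists a, b; split=> //; apply: lepm_trans mm'.
Qed.

Lemma mideal_mul A B : upset A -> upset B ->
  eqI (ideal_mul (mideal A) (mideal B)) (mideal (mmul A B)).
Proof.
move=> upA upB; apply: ideal_gen_mideal; first exact: upset_mmul.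
  move=> _ [a [b [Aa Bb ->]]] m /msuppM_le/allpairsP[[m1 m2] [/= am1 bm2 ->]].
  by exists m1, m2; split; [apply: Aa | apply: Bb | apply: lepm_refl].
move=> m [a [b [Aa Bb abm]]]; apply: (idealX_le (ideal_gen_ideal _) _ abm).
by apply: ideal_gen_sub; exists 'X_[a], 'X_[b]; split; rewrite ?midealX ?mpolyXD.
Qed.

Fixpoint mpow U k : M -> Prop :=
  if k is k'.+1 then mmul (mpow U k') U else fun _ => True.

Lemma upset_mpow U k : upset (mpow U k).
Proof. by case: k => [|k] //; apply: upset_mmul. Qed.

Lemma mideal_pow U k : upset U -> eqI (ideal_pow (mideal U) k) (mideal (mpow U k)).
Proof.
move=> upU; elim: k => [|k IHk] //=.
apply: eqI_trans (eq_ideal_mul IHk (fun f => iff_refl _)) _.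
exact/mideal_mul/upU/upset_mpow.
Qed.

Lemma mpow_le U i j m : (i <= j)%N -> mpow U j m -> mpow U i m.
Proof.
move=> /subnK <-; elim: (j - i)%N m => [|d IHd] m //= [a [b [Ua _ abm]]].
by apply/IHd/(upset_mpow Ua); apply: lepm_trans (lem_addr a b) abm.
Qed.

Lemma mpow_mulmn U s k : U s -> mpow U k (s *+ k)%MM.
Proof.
move=> Us; elim: k => [|k IHk] //=; exists (s *+ k)%MM, s.
by rewrite mulmSr; split; last exact: lepm_refl.
Qed.

Lemma mpowD U i j a b : mpow U i a -> mpow U j b -> mpow U (i + j) (a + b)%MM.
Proof.
elim: j b => [|j IHj] b Ua; first by rewrite addn0 => _; apply: upset_mpow Ua (lem_addr a b).
case=> c [d [Uc Ud cdb]]; rewrite addnS; exists (a + c)%MM, d; split=> //; first exact: IHj.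
by rewrite -addmA ![(a + _)%MM]addmC; apply: lepm_add2r.
Qed.

Lemma sub_mpow A B k m : (forall m, A m -> B m) -> mpow A k m -> mpow B k m.
Proof.
move=> AB; elim: k m => [// | k IHk] m [a [b [Aa Ab abm]]].
by exists a, b; split; [apply: IHk | apply: AB |].
Qed.

Definition munion A B : M -> Prop := fun m => A m \/ B m.

Lemma upset_munion A B : upset A -> upset B -> upset (munion A B).
Proof. by move=> upA upB m m' [/upA | /upB] Um mm'; [left | right]; apply: Um. Qed.

Lemma mideal_sum A B : upset A -> upset B ->
  eqI (ideal_sum (mideal A) (mideal B)) (mideal (munion A B)).
Proof.
move=> upA upB; apply: ideal_gen_mideal; first exact: upset_munion.
  by move=> g [Ag | Bg] m gm; [left; apply: Ag | right; apply: Bg].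
by move=> m [Am | Bm]; apply: ideal_gen_sub; [left | right]; apply/midealX.
Qed.

End MonomialIdeals.

Section RenameVariables.
Variables (K : comNzRingType) (n1 n2 : nat) (e : 'I_n1 -> 'I_n2).

Definition liftm (m : 'X_{1..n1}) : 'X_{1..n2} := (\sum_(i < n1) U_(e i) *+ m i)%MM.

Lemma liftmE m j : liftm m j = (\sum_(i < n1 | e i == j) m i)%N.
Proof.
rewrite mnm_sumE [RHS]big_mkcond; apply: eq_bigr => i _.
by rewrite mulmnE mnm1E; case: eqP; rewrite ?mul1n ?mul0n.
Qed.

Lemma liftmD m1 m2 : liftm (m1 + m2)%MM = (liftm m1 + liftm m2)%MM.
Proof.
apply/mnmP => j; rewrite mnmDE !liftmE -big_split.
by apply: eq_bigr => i _; rewrite mnmDE.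
Qed.

Lemma liftm_le m1 m2 : (m1 <= m2)%MM -> (liftm m1 <= liftm m2)%MM.
Proof. by move/mnm_lepP=> le12; apply/mnm_lepP => j; rewrite !liftmE leq_sum. Qed.

Lemma liftm_image m i : injective e -> liftm m (e i) = m i.
Proof.
move=> inj_e; rewrite liftmE (eq_bigl (pred1 i)) ?big_pred1_eq // => i' /=.
exact/inj_eq.
Qed.

Lemma liftm_outside m j : (forall i, e i != j) -> liftm m j = 0%N.
Proof. by move=> ej; rewrite liftmE big_pred0 // => i; apply/negbTE. Qed.

Definition mrename (f : {mpoly K[n1]}) : {mpoly K[n2]} :=
  mmap (@mpolyC n2 K) (fun i => 'X_(e i)) f.

Lemma mrenameE f : mrename f = \sum_(m <- msupp f) f@_m *: 'X_[liftm m].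
Proof. by apply: eq_bigr => m _; rewrite /mmap1 mprodXnE mul_mpolyC. Qed.

Lemma mrenameX m : mrename 'X_[m] = 'X_[liftm m].
Proof. by rewrite mrenameE msuppX big_seq1 mcoeffX eqxx scale1r. Qed.

Definition mlift (A : 'X_{1..n1} -> Prop) : 'X_{1..n2} -> Prop :=
  upclosure (fun m => exists2 a, A a & m = liftm a).

Lemma ideal_ext_mideal (A : 'X_{1..n1} -> Prop) :
  eqI (ideal_ext mrename (mideal A)) (mideal (mlift A)).
Proof.
have idL : is_ideal (@mideal K n2 (mlift A)) by apply: mideal_ideal; apply: upset_upclosure.
apply: ideal_gen_mideal; first exact: upset_upclosure.
  move=> _ [g [Ag ->]]; rewrite mrenameE big_seq; apply: ideal_big => // m gm.
  rewrite -mul_mpolyC; apply: (idealMl _ idL); apply/midealX.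
  by exists (liftm m); [exists m; first apply: Ag | apply: lepm_refl].
move=> m [_ [a Aa ->] am]; apply: (idealX_le (ideal_gen_ideal _) _ am).
by apply: ideal_gen_sub; exists 'X_[a]; rewrite mrenameX midealX.
Qed.

Lemma mpow_mlift (A : 'X_{1..n1} -> Prop) k m : mpow A k m -> mpow (mlift A) k (liftm m).
Proof.
elim: k m => [// | k IHk] m [a [b [Aa Ab abm]]].
exists (liftm a), (liftm b); split; first exact: IHk.
  by exists (liftm b); [exists b | apply: lepm_refl].
by rewrite -liftmD; apply: liftm_le.
Qed.

End RenameVariables.

(** * Associated primes of monomial ideals *)

Lemma sub_count_lt (T : eqType) (a1 a2 : pred T) (s : seq T) :
  subpred a1 a2 -> has (predD a2 a1) s -> (count a1 s < count a2 s)%N.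
Proof.
rewrite has_count => a12 pos.
have -> : count a2 s = (count a1 s + count (predD a2 a1) s)%N.
  rewrite -count_predUI (@eq_count _ (predI _ _) pred0) => [|x /=]; last by case: (a1 x).
  rewrite count_pred0 addn0; apply: eq_count => x /=; have := a12 x.
  by case: (a1 x); case: (a2 x) => // ->.
by rewrite -[X in (X < _)%N]addn0 ltn_add2l.
Qed.

Section MonomialResidue.
Variables (K : idomainType) (n : nat) (U : 'X_{1..n} -> Prop).
Hypothesis upU : upset U.
Local Notation R := {mpoly K[n]}.
Local Notation J := (@mideal K n U).
Implicit Types g h : R.

Definition mresidue h : R := \sum_(m <- msupp h | ~~ `[< U m >]) h@_m *: 'X_[m].

Definition nresidue h : nat := count (fun m => ~~ `[< U m >]) (msupp h).

Let idJ : is_ideal J := @mideal_ideal K n U upU.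

Lemma mideal_sub_mresidue h : J (h - mresidue h).
Proof.
rewrite {1}(mpolyE h) (bigID (fun m => ~~ `[< U m >])) /= addrAC subrr add0r.
rewrite big_seq_cond; apply: ideal_big => // m /andP[_ /negbNE/asboolP Um].
by rewrite -mul_mpolyC; apply: (idealMl _ idJ); apply/midealX.
Qed.

Lemma mresidue_eq0 h : mresidue h = 0 -> J h.
Proof. by move=> r0; have := mideal_sub_mresidue (h := h); rewrite r0 subr0. Qed.

Lemma msupp_mresidue h m : m \in msupp (mresidue h) -> m \in msupp h /\ ~ U m.
Proof.
case/msupp_sum_le/flattenP=> _ /mapP[m' + ->]; rewrite mem_filter => /andP[/asboolPn nUm' hm'].
by move/msuppZ_le; rewrite msuppX mem_seq1 => /eqP ->.
Qed.

(* The leading monomial of [g * mresidue h] lies in [U], so multiplying [h] by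
   [x^(mlead g)] moves the term [mlead (mresidue h)] of [h] into [U]. *)
Lemma nresidue_mulX_mlead g h : g != 0 -> J (g * h) -> ~ J h ->
  (nresidue (h * 'X_[mlead g]) < nresidue h)%N.
Proof.
move=> g0 Jgh nJh; have r0 : mresidue h != 0 by apply: contra_notN nJh => /eqP/mresidue_eq0.
have [he nUe] := msupp_mresidue (mlead_supp r0).
have Jgr : J (g * mresidue h).
  rewrite -[mresidue h](subKr h) mulrBr.
  by apply: (idealB idJ) => //; apply: (idealMl _ idJ); apply: mideal_sub_mresidue.
have Uge : U (mlead g + mlead (mresidue h))%MM.
  have lc0 : mleadc g * mleadc (mresidue h) != 0 by rewrite mulf_neq0 ?mleadc_eq0.
  by apply: Jgr; rewrite -(mleadM_proper lc0) mlead_supp ?mulf_neq0.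
rewrite /nresidue (permP (msuppMX h _)) count_map; apply: sub_count_lt.
  move=> m /= /asboolPn nUm; apply/asboolPn => Um; apply/nUm/(upU Um).
  by rewrite addmC lem_addr.
by apply/hasP; exists (mlead (mresidue h)) => //=; rewrite asboolT //; apply/asboolPn.
Qed.

Lemma mideal_mulX_mlead g h : g != 0 -> J (g * h) ->
  exists N, J (h * 'X_[mlead g *+ N]).
Proof.
move=> g0; suff: forall N h, (nresidue h <= N)%N -> J (g * h) -> J (h * 'X_[mlead g *+ N]).
  by move=> + Jgh => /(_ _ h (leqnn _) Jgh); exists (nresidue h).
elim=> [|N IHN] {}h hN Jgh; have [Jh | nJh] := pselect (J h); try exact: (idealMr _ idJ).
  by have := nresidue_mulX_mlead g0 Jgh nJh; rewrite ltnNge (leq_trans hN).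
rewrite mulmS mpolyXD mulrA; apply: IHN.
  by rewrite -ltnS; apply: leq_trans (nresidue_mulX_mlead g0 Jgh nJh) hN.
by rewrite mulrA; exact: (idealMr _ idJ).
Qed.

End MonomialResidue.

Section AssociatedPrimes.
Variables (K : idomainType) (n : nat) (U : 'X_{1..n} -> Prop).
Hypothesis upU : upset U.
Local Notation R := {mpoly K[n]}.
Local Notation J := (@mideal K n U).
Variables (P : subset_of R) (f : R).
Hypotheses (primeP : prime_ideal P) (Pf : forall g, P g <-> J (g * f)).

Let idealP : is_ideal P. Proof. by case: primeP. Qed.

Lemma ass_mlead g : g != 0 -> P g -> P 'X_[mlead g].
Proof.
move=> g0 /Pf/(mideal_mulX_mlead upU g0)[N JfX].
by apply: (prime_ideal_exp (k := N) primeP); apply/Pf; rewrite mpolyXn mulrC.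
Qed.

Lemma ass_msupp g m : P g -> m \in msupp g -> P 'X_[m].
Proof.
elim: {g}(size (msupp g)) {-2}g (leqnn (size (msupp g))) => [|N IHN] g gN Pg gm.
  by move: gN gm; rewrite leqn0 size_eq0 => /eqP ->.
have g0 : g != 0 by apply: contraTneq gm => ->; rewrite msupp0.
have [-> | m_neq] := eqVneq m (mlead g); first exact: ass_mlead.
apply: (IHN (g - g@_(mlead g) *: 'X_[mlead g])).
- by rewrite (perm_size (msupp_rem g _)) size_rem ?mlead_supp // -subn1 leq_subLR.
- by apply: (idealB idealP) => //; rewrite -mul_mpolyC; apply: (idealMl _ idealP); apply: ass_mlead.
- by rewrite (perm_mem (msupp_rem g _)) mem_rem_uniq ?msupp_uniq // inE /= m_neq.
Qed.

(* If every colon [(J : x^m)], [m] in the support of [f], contained an element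
   [g_m] outside [P], then [prod_m g_m] would be outside [P] but kill [f]. *)
Lemma ass_colonX : exists u, forall g, P g <-> J (g * 'X_[u]).
Proof.
have P_colon m g : m \in msupp f -> P g -> J (g * 'X_[m]).
  move=> fm Pg; apply/mideal_colon => d gd.
  have /Pf := ass_msupp Pg gd; rewrite mulrC => /mideal_colon/(_ m fm).
  by rewrite addmC.
suff [m [fm colonP]] : exists m, m \in msupp f /\ forall g, J (g * 'X_[m]) -> P g.
  by exists m => g; split; [apply: P_colon | apply: colonP].
apply: contrapT => no_m.
have /choice[G GP] : forall m, exists g, ~ P g /\ (m \in msupp f -> J (g * 'X_[m])).
  move=> m; have [fm | _] := boolP (m \in msupp f); last by exists 1; case: primeP.
  apply: contrapT => no_g; apply: no_m; exists m; split=> // g Jg.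
  by apply: contrapT => nPg; apply: no_g; exists g.
apply: (prime_ideal_prod (s := msupp f) primeP (fun m => proj1 (GP m))); apply/Pf.
have idJ : is_ideal J := @mideal_ideal K n U upU.
rewrite {2}(mpolyE f) big_distrr /= big_seq; apply: ideal_big => // m fm.
rewrite -mul_mpolyC mulrCA; apply: (idealMl _ idJ).
by rewrite (big_rem _ fm) /= mulrAC; apply: (idealMr _ idJ); apply: (proj2 (GP m)).
Qed.

End AssociatedPrimes.

(* [hits V x]: ['X_[x]] lies in the ideal generated by the ['X_i] with [V i]. *)
Definition hits n (V : 'I_n -> Prop) (x : 'X_{1..n}) : Prop :=
  exists2 i, V i & (0 < x i)%N.

Lemma hitsD n (V : 'I_n -> Prop) x y :
  hits V (x + y)%MM <-> hits V x \/ hits V y.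
Proof.
split=> [[i Vi] | [[i Vi xi] | [i Vi yi]]]; last 2 first.
- by exists i; rewrite // mnmDE; lia.
- by exists i; rewrite // mnmDE; lia.
rewrite mnmDE; have [xi0 | xi] := posnP (x i); last by left; exists i.
by rewrite xi0 add0n; right; exists i.
Qed.

Lemma hits0 n (V : 'I_n -> Prop) : ~ hits V 0%MM.
Proof. by case=> i _; rewrite mnm0E. Qed.

Lemma upset_hits n (V : 'I_n -> Prop) : upset (hits V).
Proof. by move=> x y [i Vi xi] /mnm_lepP/(_ i) xy; exists i => //; lia. Qed.

(* [colon_hits U u V]: the colon [(mideal U : 'X_[u])] is [mideal (hits V)]. *)
Definition colon_hits n (U : 'X_{1..n} -> Prop) u (V : 'I_n -> Prop) :=
  forall x, U (x + u)%MM <-> hits V x.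

Section MonomialPrimes.
Variables (K : idomainType) (n : nat).
Local Notation R := {mpoly K[n]}.

Lemma prime_mideal_hits (P : subset_of R) W : prime_ideal P -> eqI P (mideal W) ->
  upset W -> forall m, W m <-> hits (fun i => W U_(i)%MM) m.
Proof.
move=> primeP PW upW m; split=> [Wm | [i Wi mi]]; last first.
  by apply: upW Wi _; rewrite lep1mP -lt0n.
apply: contrapT => nhits; have: ~ P (\prod_(i < n) 'X_i ^+ m i).
  apply: (prime_ideal_prod (F := fun i => 'X_i ^+ m i) primeP) => i.
  have [-> | mi] := posnP (m i); first by rewrite expr0; case: primeP.
  by move/(prime_ideal_exp primeP)/PW/midealX => Wi; apply: nhits; exists i.
by rewrite -mpolyXE_id; apply; apply/PW/midealX.
Qed.

Lemma mideal_hits_prime (V : 'I_n -> Prop) : prime_ideal (@mideal K n (hits V)).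
Proof.
have upV := @upset_hits n V; have idJ := @mideal_ideal K n _ upV.
split=> //; first by rewrite -mpolyX0 => /midealX/hits0.
move=> a b Jab; apply: contrapT => /not_orP[nJa nJb].
have ra0 : mresidue (hits V) a != 0 by apply: contra_notN nJa => /eqP/mresidue_eq0; apply.
have rb0 : mresidue (hits V) b != 0 by apply: contra_notN nJb => /eqP/mresidue_eq0; apply.
have Jda := mideal_sub_mresidue upV (h := a); have Jdb := mideal_sub_mresidue upV (h := b).
set ra := mresidue _ a in ra0 Jda; set rb := mresidue _ b in rb0 Jdb.
have Jr : mideal (hits V) (ra * rb).
  have -> : ra * rb = a * b - (a * (b - rb) + (a - ra) * rb).
    by rewrite mulrBr mulrBl addrA subrK opprB addrC subrK.
  apply: (idealB idJ) => //; apply: (idealD idJ).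
    exact: (idealMl _ idJ).
  exact: (idealMr _ idJ).
have lc0 : mleadc ra * mleadc rb != 0 by rewrite mulf_neq0 ?mleadc_eq0.
have := Jr _ (mlead_supp (mulf_neq0 ra0 rb0)); rewrite (mleadM_proper lc0) => /hitsD[].
  by have [_] := msupp_mresidue (mlead_supp ra0).
by have [_] := msupp_mresidue (mlead_supp rb0).
Qed.

Lemma Ass_midealP (U : 'X_{1..n} -> Prop) (P : subset_of R) : upset U ->
  Ass (mideal U) P <->
  exists u V, eqI P (mideal (hits V)) /\ colon_hits U u V.
Proof.
move=> upU; split=> [[primeP [f Pf]] | [u [V [PV UV]]]].
  have [u Pu] := ass_colonX upU primeP Pf.
  pose W x := U (x + u)%MM.
  have upW : upset W.
    by move=> x y Wx /(lepm_add2r u); apply: upU.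
  have PW : eqI P (mideal W) by move=> g; rewrite Pu mideal_colon.
  have WV := prime_mideal_hits primeP PW upW.
  exists u, (fun i => W U_(i)%MM); split=> [g | //].
  by rewrite PW; split=> Wg m /Wg /WV.
split; first exact: eq_prime_ideal (eqI_sym PV) (mideal_hits_prime V).
by exists 'X_[u] => g; rewrite PV mideal_colon; split=> Vg m /Vg /UV.
Qed.

End MonomialPrimes.

Lemma mpow_dropX n (T : 'X_{1..n} -> Prop) k m i :
  mpow T k.+1 (m + U_(i))%MM -> mpow T k m.
Proof.
elim: k m => [// | k IHk] m [a [b [Ta Tb /mnm_lepP abm]]].
have {}abm j : (a j + b j <= m j + (i == j))%N by have := abm j; rewrite !mnmDE mnm1E.
have [bi0 | bi] := posnP (b i); last first.
  apply: (upset_mpow (k := k.+1) Ta); apply/mnm_lepP => j.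
  by have := abm j; case: eqP => [<- | _] /=; lia.
exists (m - b)%MM, b; split=> //.
  apply: IHk; apply: (upset_mpow (k := k.+1) Ta); apply/mnm_lepP => j.
  rewrite mnmDE mnmBE mnm1E; have := abm j.
  by case: eqP => [<- | _]; rewrite ?bi0 /=; lia.
apply/mnm_lepP => j; rewrite mnmDE mnmBE; have := abm j.
by case: eqP => [<- | _]; rewrite ?bi0 /=; lia.
Qed.

Definition copersistent_upset n (T : 'X_{1..n} -> Prop) :=
  forall a u (V : 'I_n -> Prop), (1 <= a)%N -> (exists i, V i) ->
  colon_hits (mpow T a.+1) u V ->
  exists2 w, mpow T a.-1 w & colon_hits (mpow T a) w V.

Lemma copersistence_upset (K : idomainType) n (I : subset_of {mpoly K[n]}) T :
  upset T -> eqI I (mideal T) -> copersistence I -> copersistent_upset T.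
Proof.
move=> upT IT copI a u V a1 [t Vt] colon_u.
have powI k : eqI (ideal_pow I k) (mideal (mpow T k)).
  exact: eqI_trans (eq_ideal_pow k IT) (mideal_pow k upT).
have AssV : Ass (ideal_pow I a.+1) (mideal (hits V)).
  apply: eq_Ass (eqI_sym (powI _)) _; apply/Ass_midealP; first exact: upset_mpow.
  by exists u, V.
have /(eq_Ass (powI _))/Ass_midealP[|w [V' [VV' colon_w]]] := copI a a1 _ AssV.
  exact: upset_mpow.
have {}colon_w : colon_hits (mpow T a) w V.
  by move=> x; rewrite colon_w -(midealX K (hits V')) -VV' midealX.
exists w => //; case: a a1 colon_w {AssV colon_u} => // a _ colon_w.
apply: (mpow_dropX (i := t)); rewrite addmC; apply/colon_w.
by exists t; rewrite // mnm1E eqxx.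
Qed.

(** * Splitting the variables *)

Section SplitVariables.
Variables (m p : nat).
Local Notation N := (m + p)%N.
Implicit Types (mm : 'X_{1..N}) (x : 'X_{1..m}) (y : 'X_{1..p}).

Definition lpart mm : 'X_{1..m} := [multinom mm (lshift p i) | i < m].
Definition rpart mm : 'X_{1..p} := [multinom mm (rshift m j) | j < p].
Definition lshiftm x : 'X_{1..N} := liftm (lshift p) x.
Definition rshiftm y : 'X_{1..N} := liftm (@rshift m p) y.
Definition mjoin x y : 'X_{1..N} := (lshiftm x + rshiftm y)%MM.

Lemma lpartD mm1 mm2 : lpart (mm1 + mm2)%MM = (lpart mm1 + lpart mm2)%MM.
Proof. by apply/mnmP => i; rewrite mnmDE !mnmE. Qed.

Lemma rpartD mm1 mm2 : rpart (mm1 + mm2)%MM = (rpart mm1 + rpart mm2)%MM.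
Proof. by apply/mnmP => j; rewrite mnmDE !mnmE. Qed.

Lemma lpart_le mm1 mm2 : (mm1 <= mm2)%MM -> (lpart mm1 <= lpart mm2)%MM.
Proof. by move/mnm_lepP=> le12; apply/mnm_lepP => i; rewrite !mnmE. Qed.

Lemma rpart_le mm1 mm2 : (mm1 <= mm2)%MM -> (rpart mm1 <= rpart mm2)%MM.
Proof. by move/mnm_lepP=> le12; apply/mnm_lepP => j; rewrite !mnmE. Qed.

Lemma lpart_lshiftm x : lpart (lshiftm x) = x.
Proof. by apply/mnmP => i; rewrite mnmE liftm_image //; apply: lshift_inj. Qed.

Lemma rpart_rshiftm y : rpart (rshiftm y) = y.
Proof. by apply/mnmP => j; rewrite mnmE liftm_image //; apply: rshift_inj. Qed.

Lemma lpart_rshiftm y : lpart (rshiftm y) = 0%MM.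
Proof. by apply/mnmP => i; rewrite !mnmE liftm_outside // => j; rewrite eq_rlshift. Qed.

Lemma rpart_lshiftm x : rpart (lshiftm x) = 0%MM.
Proof. by apply/mnmP => j; rewrite !mnmE liftm_outside // => i; rewrite eq_lrshift. Qed.

Lemma lpart_mjoin x y : lpart (mjoin x y) = x.
Proof. by rewrite lpartD lpart_lshiftm lpart_rshiftm addm0. Qed.

Lemma rpart_mjoin x y : rpart (mjoin x y) = y.
Proof. by rewrite rpartD rpart_lshiftm rpart_rshiftm add0m. Qed.

Lemma mjoin_part mm : mjoin (lpart mm) (rpart mm) = mm.
Proof.
apply/mnmP => k; rewrite mnmDE; case: (split_ordP k) => [i | j] ->.
  rewrite [lshiftm _ _]liftm_image; last exact: lshift_inj.
  by rewrite [rshiftm _ _]liftm_outside ?mnmE ?addn0 // => j; rewrite eq_rlshift.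
rewrite [rshiftm _ _]liftm_image; last exact: rshift_inj.
by rewrite [lshiftm _ _]liftm_outside ?mnmE // => i; rewrite eq_lrshift.
Qed.

Lemma hits_split (V : 'I_N -> Prop) mm :
  hits V mm <-> hits (V \o lshift p) (lpart mm) \/ hits (V \o @rshift m p) (rpart mm).
Proof.
split=> [[k Vk] | [[i Vi] | [j Vj]]]; rewrite ?mnmE; try by eexists; eauto.
by case: (split_ordP k) Vk => [i | j] -> Vk mk; [left; exists i | right; exists j]; rewrite ?mnmE.
Qed.

Variables (T1 : 'X_{1..m} -> Prop) (T2 : 'X_{1..p} -> Prop).

Definition munion_lift : 'X_{1..N} -> Prop :=
  munion (mlift (lshift p) T1) (mlift (@rshift m p) T2).

Lemma mpow_munion_lift k mm : mpow munion_lift k mm <->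
  exists i j, [/\ (i + j = k)%N, mpow T1 i (lpart mm) & mpow T2 j (rpart mm)].
Proof.
split.
  elim: k mm => [|k IHk] mm; first by exists 0%N, 0%N.
  case=> a [b [/IHk[i [j [<- T1a T2a]]] Tb abm]].
  have am : (a <= mm)%MM := lepm_trans (lem_addr a b) abm.
  have asm t : (t <= b)%MM -> (a + t <= mm)%MM.
    by move=> tb; apply: lepm_trans abm; rewrite ![(a + _)%MM]addmC; apply: lepm_add2r.
  case: Tb => -[_ [s Ts ->] sb].
  - exists i.+1, j; split=> //; last exact: upset_mpow T2a (rpart_le am).
    exists (lpart a), s; split=> //.
    by rewrite -(lpart_lshiftm s) -lpartD; apply/lpart_le/asm.
  - exists i, j.+1; rewrite addnS; split=> //; first exact: upset_mpow T1a (lpart_le am).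
    exists (rpart a), s; split=> //.
    by rewrite -(rpart_rshiftm s) -rpartD; apply/rpart_le/asm.
case=> i [j [<- T1m T2m]]; rewrite -(mjoin_part mm); apply: mpowD.
  by apply/(sub_mpow _ (mpow_mlift _ T1m)) => ? ?; left.
by apply/(sub_mpow _ (mpow_mlift _ T2m)) => ? ?; right.
Qed.

End SplitVariables.

(** * Lowering the power *)

(* [colon_hits (mpow (munion_lift T1 T2) k) (mjoin u1 u2) V] for [V = V1 + V2],
   read through [mpow_munion_lift]; see [colon_hits_split]. *)
Definition split_colon n1 n2 (T1 : 'X_{1..n1} -> Prop) (T2 : 'X_{1..n2} -> Prop)
    (V1 : 'I_n1 -> Prop) (V2 : 'I_n2 -> Prop) k u1 u2 :=
  forall x y, hits V1 x \/ hits V2 y <->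
    exists i j, [/\ (i + j = k)%N, mpow T1 i (x + u1)%MM & mpow T2 j (y + u2)%MM].

Definition colon_level n (T : 'X_{1..n} -> Prop) (V : 'I_n -> Prop) u a :=
  forall x, ~ hits V x -> forall i, mpow T i (x + u)%MM <-> (i <= a)%N.

Section ColonLevel.
Variables (n : nat) (T : 'X_{1..n} -> Prop) (V : 'I_n -> Prop).

Lemma colon_level_top u a : colon_level T V u a -> forall x, mpow T a (x + u)%MM.
Proof.
move=> lev x; have := (lev 0%MM (@hits0 _ V) a).2 (leqnn a).
by rewrite add0m => /upset_mpow; apply; apply: lem_addl.
Qed.

Lemma colon_level_max u k :
  (forall x i, ~ hits V x -> mpow T i (x + u)%MM -> (i <= k)%N) ->
  exists a x1, ~ hits V x1 /\ colon_level T V (x1 + u)%MM a.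
Proof.
move=> bound; pose Q i := `[< exists x, ~ hits V x /\ mpow T i (x + u)%MM >].
have Q0 : exists i, Q i by exists 0%N; apply/asboolP; exists 0%MM; split=> //; apply: hits0.
have Qk i : Q i -> (i <= k)%N by case/asboolP=> x [nx Tx]; apply: bound Tx.
case: (ex_maxnP Q0 Qk) => a /asboolP[x1 [nx1 Tx1]] maxa.
exists a, x1; split=> // x nx i; split=> [Ti | ia].
  apply: maxa; apply/asboolP; exists (x + x1)%MM; rewrite -addmA.
  by split=> // /hitsD[].
by apply: mpow_le ia _; apply: upset_mpow Tx1 _; apply: lem_addl.
Qed.

Lemma colon_level_nonempty u a : colon_level T V u a -> (1 <= a)%N -> exists i, V i.
Proof.
move=> lev a1; apply: contrapT => nV.
have nh x : ~ hits V x by case=> i Vi _; apply: nV; exists i.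
case: a a1 lev => // a _ lev; have [_ [s [_ Ts _]]] := colon_level_top lev 0%MM.
have big : mpow T a.+2 (s *+ a.+2 + u)%MM.
  by apply: upset_mpow (mpow_mulmn _ Ts) _; apply: lem_addr.
by have := (lev _ (nh _) a.+2).1 big; rewrite ltnn.
Qed.

End ColonLevel.

Section SplitColon.
Variables (n1 n2 : nat) (T1 : 'X_{1..n1} -> Prop) (T2 : 'X_{1..n2} -> Prop).
Variables (V1 : 'I_n1 -> Prop) (V2 : 'I_n2 -> Prop).
Local Notation colon := (split_colon T1 T2 V1 V2).

Lemma split_colon_sym k u1 u2 : colon k u1 u2 -> split_colon T2 T1 V2 V1 k u2 u1.
Proof.
move=> c y x; rewrite or_comm c.
by split=> -[i [j [ij Ti Tj]]]; exists j, i; rewrite addnC.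
Qed.

Lemma split_colon_shift k u1 u2 x1 y1 : ~ hits V1 x1 -> ~ hits V2 y1 ->
  colon k u1 u2 -> colon k (x1 + u1)%MM (y1 + u2)%MM.
Proof. by move=> nx1 ny1 c x y; rewrite !addmA -c !hitsD; tauto. Qed.

Lemma split_colon_bound k u1 u2 : colon k.+1 u1 u2 ->
  forall x i, ~ hits V1 x -> mpow T1 i (x + u1)%MM -> (i <= k)%N.
Proof.
move=> c x i nx T1i; rewrite leqNgt; apply/negP => ki.
have [] // : hits V1 x \/ hits V2 0%MM; last exact: hits0.
by apply/c; exists k.+1, 0%N; rewrite addn0; split=> //; apply: mpow_le T1i.
Qed.

Lemma split_colon_hits_level k u1 u2 b x : colon k.+1 u1 u2 ->
  colon_level T2 V2 u2 b -> hits V1 x -> mpow T1 (k.+1 - b) (x + u1)%MM.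
Proof.
move=> c lev2 hx; have [i [j [ij T1i T2j]]] := (c x 0%MM).1 (or_introl hx).
have := (lev2 0%MM (@hits0 _ V2) j).1 T2j => jb.
by apply: mpow_le T1i; lia.
Qed.

End SplitColon.

Section SplitColonStep.
Variables (n1 n2 : nat) (T1 : 'X_{1..n1} -> Prop) (T2 : 'X_{1..n2} -> Prop).
Variables (V1 : 'I_n1 -> Prop) (V2 : 'I_n2 -> Prop) (u1 : 'X_{1..n1}) (u2 : 'X_{1..n2}).
Variables (a b : nat).
Hypotheses (lev1 : colon_level T1 V1 u1 a) (lev2 : colon_level T2 V2 u2 b).
Local Notation colon := (split_colon T1 T2 V1 V2).

Lemma split_colon_level_sum k : colon k.+1 u1 u2 -> (a + b <= k)%N.
Proof.
move=> c; rewrite leqNgt; apply/negP => kab.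
have [] : hits V1 0%MM \/ hits V2 0%MM; [| exact: hits0 | exact: hits0].
apply/c; exists (minn a k.+1), (k.+1 - minn a k.+1)%N; split; first lia.
  by apply/(lev1 (@hits0 _ V1)); apply: geq_minl.
by apply/(lev2 (@hits0 _ V2)); lia.
Qed.

Lemma split_colon_slack k : colon k.+1 u1 u2 -> (a + b < k)%N -> colon k u1 u2.
Proof.
move=> c abk x y; split=> [[hx | hy] | [i [j [ij T1i T2j]]]].
- exists (k - b)%N, b; split; [lia | | exact: (colon_level_top lev2 y)].
  by apply: mpow_le (split_colon_hits_level c lev2 hx); lia.
- exists a, (k - a)%N; split; [lia | exact: (colon_level_top lev1 x) |].
  by apply: mpow_le (split_colon_hits_level (split_colon_sym c) lev1 hy); lia.
apply: contrapT => /not_orP[nx ny].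
by have := (lev1 nx i).1 T1i; have := (lev2 ny j).1 T2j; lia.
Qed.

(* The tight case [a + b = k] is where copersistence of [T1] enters: it trades
   the witness [u1] of level [a + 1] for a witness [w] of level [a]. *)
Lemma split_colon_tight : copersistent_upset T1 -> (1 <= a)%N ->
  colon (a + b).+1 u1 u2 -> exists v1 v2, colon (a + b) v1 v2.
Proof.
move=> cop1 a1 c.
have hit1 x : hits V1 x -> mpow T1 a.+1 (x + u1)%MM.
  by move/(split_colon_hits_level c lev2); rewrite -addSn addnK.
have hit2 y : hits V2 y -> mpow T2 b.+1 (y + u2)%MM.
  by move/(split_colon_hits_level (split_colon_sym c) lev1); rewrite -addnS addKn.
have colon_u1 : colon_hits (mpow T1 a.+1) u1 V1.
  move=> x; split=> [T1x | /hit1 //]; apply: contrapT => nx.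
  by have := (lev1 nx a.+1).1 T1x; rewrite ltnn.
have [w T1w colon_w] := cop1 a u1 V1 a1 (colon_level_nonempty lev1 a1) colon_u1.
exists w, u2 => x y; split=> [[hx | hy] | [i [j [ij T1i T2j]]]].
- by exists a, b; split=> //; [apply/colon_w | exact: (colon_level_top lev2 y)].
- exists a.-1, b.+1; split; [lia | | exact: hit2].
  by apply: upset_mpow T1w _; apply: lem_addl.
apply: contrapT => /not_orP[nx ny].
by have := (lev2 ny j).1 T2j => jb; apply/nx/colon_w; apply: mpow_le T1i; lia.
Qed.

End SplitColonStep.

Lemma split_colon_descend n1 n2 (T1 : 'X_{1..n1} -> Prop) (T2 : 'X_{1..n2} -> Prop)
    V1 V2 k u1 u2 :
  copersistent_upset T1 -> copersistent_upset T2 -> (1 <= k)%N ->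
  split_colon T1 T2 V1 V2 k.+1 u1 u2 -> exists v1 v2, split_colon T1 T2 V1 V2 k v1 v2.
Proof.
move=> cop1 cop2 k1 c.
have [a [x1 [nx1 lev1]]] := colon_level_max (split_colon_bound c).
have [b [y1 [ny1 lev2]]] := colon_level_max (split_colon_bound (split_colon_sym c)).
have {nx1 ny1}c := split_colon_shift nx1 ny1 c.
have := split_colon_level_sum lev1 lev2 c; rewrite leq_eqVlt => /orP[/eqP abk | abk]; last first.
  by exists (x1 + u1)%MM, (y1 + u2)%MM; exact: (split_colon_slack lev1 lev2 c abk).
rewrite -abk in c *; have [a0 | a1] := posnP a; last exact: (split_colon_tight lev1 lev2 cop1 a1 c).
rewrite addnC in c; have b1 : (1 <= b)%N by lia.
have [v2 [v1 c']] := split_colon_tight lev2 lev1 cop2 b1 (split_colon_sym c).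
by exists v1, v2; rewrite addnC; exact: (split_colon_sym c').
Qed.

Lemma monomial_ideal_upset (K : fieldType) n (I : subset_of {mpoly K[n]}) :
  monomial_ideal I -> exists2 T, upset T & eqI I (mideal T).
Proof.
case=> S IS; exists (upclosure S); first exact: upset_upclosure.
exact: eqI_trans IS (monomial_idealE S).
Qed.

Section SumOfExtensions.
Variables (K : fieldType) (m p : nat).
Variables (T1 : 'X_{1..m} -> Prop) (T2 : 'X_{1..p} -> Prop).
Local Notation T := (munion_lift T1 T2).

Lemma upset_munion_lift : upset T.
Proof. by apply: upset_munion; apply: upset_upclosure. Qed.

Lemma ideal_sum_ext_mideal (I1 : subset_of {mpoly K[m]}) (I2 : subset_of {mpoly K[p]}) :
  eqI I1 (mideal T1) -> eqI I2 (mideal T2) ->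
  eqI (ideal_sum (ideal_ext (@embed_left K m p) I1) (ideal_ext (@embed_right K m p) I2))
      (mideal T).
Proof.
move=> IT1 IT2.
apply: eqI_trans (eq_ideal_sum (eq_ideal_ext (@embed_left K m p) IT1)
                               (eq_ideal_ext (@embed_right K m p) IT2)) _.
apply: eqI_trans (eq_ideal_sum (ideal_ext_mideal (K := K) (lshift p) T1)
                               (ideal_ext_mideal (K := K) (@rshift m p) T2)) _.
by apply: mideal_sum; apply: upset_upclosure.
Qed.

Lemma colon_hits_split k u (V : 'I_(m + p) -> Prop) :
  colon_hits (mpow T k) u V <->
  split_colon T1 T2 (V \o lshift p) (V \o @rshift m p) k (lpart u) (rpart u).
Proof.
suff colon_join x y : mpow T k (mjoin x y + u)%MM <->
    exists i j, [/\ (i + j = k)%N, mpow T1 i (x + lpart u)%MM & mpow T2 j (y + rpart u)%MM].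
  split=> [c x y | c z].
    by rewrite -colon_join c hits_split lpart_mjoin rpart_mjoin.
  by rewrite -(mjoin_part z) colon_join -c -hits_split mjoin_part.
by rewrite mpow_munion_lift lpartD rpartD lpart_mjoin rpart_mjoin.
Qed.

Lemma Ass_mpow_munion_lift k (P : subset_of {mpoly K[m + p]}) :
  Ass (mideal (mpow T k)) P <->
  exists V u1 u2, eqI P (mideal (hits V)) /\
    split_colon T1 T2 (V \o lshift p) (V \o @rshift m p) k u1 u2.
Proof.
rewrite Ass_midealP; last exact: upset_mpow.
split=> [[u [V [PV c]]] | [V [u1 [u2 [PV c]]]]].
  by exists V, (lpart u), (rpart u); split=> //; apply/colon_hits_split.
exists (mjoin u1 u2), V; split=> //; apply/colon_hits_split.
by rewrite lpart_mjoin rpart_mjoin.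
Qed.

End SumOfExtensions.

Theorem proposition3p3 (K : fieldType) (m p : nat) (hm : (1 <= m)%N)
  (I1 : subset_of {mpoly K[m]}) (I2 : subset_of {mpoly K[p]})
  (I : subset_of {mpoly K[m + p]}) :
  monomial_ideal I1 -> monomial_ideal I2 -> monomial_ideal I ->
  (forall f, I f <-> ideal_sum (ideal_ext (@embed_left K m p) I1)
                              (ideal_ext (@embed_right K m p) I2) f) ->
  copersistence I1 -> copersistence I2 -> copersistence I.
Proof.
move=> /monomial_ideal_upset[T1 upT1 IT1] /monomial_ideal_upset[T2 upT2 IT2] _ IE cop1 cop2.
have IT := eqI_trans IE (ideal_sum_ext_mideal IT1 IT2).
have AssI k P : Ass (ideal_pow I k) P <-> Ass (mideal (mpow (munion_lift T1 T2) k)) P.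
  have powIT := eqI_trans (eq_ideal_pow k IT) (mideal_pow k (@upset_munion_lift m p T1 T2)).
  by split; apply: eq_Ass; [| apply: eqI_sym].
move=> k k1 P /AssI/Ass_mpow_munion_lift[V [u1 [u2 [PV c]]]].
have [v1 [v2 c']] := split_colon_descend (copersistence_upset upT1 IT1 cop1)
  (copersistence_upset upT2 IT2 cop2) k1 c.
by apply/AssI/Ass_mpow_munion_lift; exists V, v1, v2.
Qed.
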